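(* If $A$ and $B$ are finitely generated left-orderable groups that are both Prieto, then $A\times B$ is Prieto.
   Context: A positive cone of a group $G$ is a subsemigroup $P$ with $G=P\sqcup P^{-1}\sqcup\{1\}$. A finitely generated left-orderable group $G$ is Prieto if every positive cone of $G$ is coarsely connected with respect to the word metric $d_X$ of some (equivalently any) finite generating set $X$, i.e. for each positive cone $P$ there is $r\ge1$ such that any two elements of $P$ are joined by a sequence $p_0,\dots,p_n$ in $P$ with $d_X(p_i,p_{i+1})\le r$. *)

From Stdlib Require Import List.
Import ListNotations.
Set Implicit Arguments.

Record group := Group {
  gcar :> Type;
  gmul : gcar -> gcar -> gcar;
  gone : gcar;
  ginv : gcar -> gcar;
  gmulA : forall x y z, gmul x (gmul y z) = gmul (gmul x y) z;
  gmul1 : forall x, gmul x gone = x;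
  g1mul : forall x, gmul gone x = x;
  gmulV : forall x, gmul x (ginv x) = gone;
  gVmul : forall x, gmul (ginv x) x = gone
}.

Arguments gmul {g}.
Arguments gone {g}.
Arguments ginv {g}.

Definition prod_group (A B : group) : group.
Proof.
refine (@Group (A * B)%type
  (fun x y => (gmul (fst x) (fst y), gmul (snd x) (snd y)))
  (gone, gone)
  (fun x => (ginv (fst x), ginv (snd x))) _ _ _ _ _).
- intros; simpl; now rewrite !gmulA.
- intros [a b]; simpl; now rewrite !gmul1.
- intros [a b]; simpl; now rewrite !g1mul.
- intros [a b]; simpl; now rewrite !gmulV.
- intros [a b]; simpl; now rewrite !gVmul.
Defined.

Definition positive_cone {G : group} (P : G -> Prop) : Prop :=
  (forall x y, P x -> P y -> P (gmul x y)) /\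
  (forall g, P g \/ P (ginv g) \/ g = gone) /\
  (forall g, P g -> ~ P (ginv g)) /\
  (forall g, P g -> g <> gone) /\
  (forall g, P (ginv g) -> g <> gone).

Definition left_orderable (G : group) : Prop :=
  exists lt : G -> G -> Prop,
    (forall x, ~ lt x x) /\
    (forall x y z, lt x y -> lt y z -> lt x z) /\
    (forall x y, lt x y \/ x = y \/ lt y x) /\
    (forall g x y, lt x y -> lt (gmul g x) (gmul g y)).

(* Words over X ∪ X^{-1}: a letter (x, b) stands for x if b = false, x^{-1} if b = true. *)
Definition eval_word {G : group} (w : list (G * bool)) : G :=
  fold_right (fun (l : G * bool) (acc : G) => gmul (if snd l then ginv (fst l) else fst l) acc) (@gone G) w.

Definition word_over {G : group} (X : list G) (w : list (G * bool)) : Prop :=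
  forall l, In l w -> In (fst l) X.

Definition generates {G : group} (X : list G) : Prop :=
  forall g : G, exists w, word_over X w /\ eval_word w = g.

Definition finitely_generated (G : group) : Prop :=
  exists X : list G, generates X.

Definition dist_le {G : group} (X : list G) (r : nat) (g h : G) : Prop :=
  exists w, word_over X w /\ length w <= r /\ eval_word w = gmul (ginv g) h.

Definition coarsely_connected {G : group} (X : list G) (P : G -> Prop) : Prop :=
  exists r : nat, 1 <= r /\
    forall p q, P p -> P q ->
      exists (n : nat) (s : nat -> G),
        s 0 = p /\ s n = q /\
        (forall i, i <= n -> P (s i)) /\
        (forall i, i < n -> dist_le X r (s i) (s (S i))).

Definition prieto (G : group) : Prop :=
  finitely_generated G /\ left_orderable G /\
  exists X : list G, generates X /\
    forall P : G -> Prop, positive_cone P -> coarsely_connected X P.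

(* A positive cone P of A x B restricts to positive cones P_A = {a | (a,1) in P}
   and P_B = {b | (1,b) in P} of the factors, which are coarsely connected by
   hypothesis.  For g in P the translate g (P_A x 1) lies in P, and g is one
   bounded jump away from g (a0,1) for a fixed a0 in P_A; hence g is coarsely
   connected inside P to every g (x,1) with x in P_A, and likewise for P_B.
   Starting from (a,b) in P, such moves first make the A-coordinate positive,
   then the B-coordinate, and finally strip off the A-coordinate, landing in
   the coarsely connected set 1 x P_B.  If P_A or P_B is empty, the
   corresponding factor is trivial and P is a copy of a positive cone of the
   other factor. *)

From Stdlib Require Import List Arith Lia Classical.

Set Implicit Arguments.

Section GroupLaws.
Context {G : group}.
Implicit Types (g x y z : G) (w : list (G * bool)) (X : list G) (P : G -> Prop).

Lemma gmul_cancel_l x y z : gmul x y = gmul x z -> y = z.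
Proof.
  intro H. apply (f_equal (gmul (ginv x))) in H.
  now rewrite !gmulA, gVmul, !g1mul in H.
Qed.

Lemma ginv_unique x y : gmul x y = gone -> y = ginv x.
Proof. intro H. apply (gmul_cancel_l x). now rewrite H, gmulV. Qed.

Lemma ginv_mul x y : ginv (gmul x y) = gmul (ginv y) (ginv x).
Proof.
  symmetry; apply ginv_unique.
  now rewrite <- gmulA, (gmulA _ y), gmulV, g1mul, gmulV.
Qed.

Lemma ginv_involutive x : ginv (ginv x) = x.
Proof. symmetry; apply ginv_unique, gVmul. Qed.

Lemma ginv_one : ginv (@gone G) = gone.
Proof. symmetry; apply ginv_unique, gmul1. Qed.

Lemma ginv_mul_translate g x y : gmul (ginv (gmul g x)) (gmul g y) = gmul (ginv x) y.
Proof. now rewrite ginv_mul, <- gmulA, (gmulA _ (ginv g)), gVmul, g1mul. Qed.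

Lemma eval_word_app w1 w2 : eval_word (w1 ++ w2) = gmul (eval_word w1) (eval_word w2).
Proof.
  induction w1 as [|l w1 IH]; simpl.
  - now rewrite g1mul.
  - now rewrite IH, gmulA.
Qed.

Lemma word_over_app X w1 w2 : word_over X w1 -> word_over X w2 -> word_over X (w1 ++ w2).
Proof. intros H1 H2 l Hl. apply in_app_or in Hl as [Hl|Hl]; auto. Qed.

Definition inv_word w : list (G * bool) := rev (map (fun l => (fst l, negb (snd l))) w).

Lemma eval_inv_word w : eval_word (inv_word w) = ginv (eval_word w).
Proof.
  induction w as [|[x b] w IH].
  - symmetry; apply ginv_one.
  - unfold inv_word in *. simpl map. simpl rev. rewrite eval_word_app, IH.
    simpl. rewrite ginv_mul, gmul1. destruct b; simpl; now rewrite ?ginv_involutive.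
Qed.

Lemma word_over_inv X w : word_over X w -> word_over X (inv_word w).
Proof.
  intros H l Hl. apply in_rev, in_map_iff in Hl as [l0 [<- Hl0]].
  exact (H _ Hl0).
Qed.

Lemma dist_le_sym X r g h : dist_le X r g h -> dist_le X r h g.
Proof.
  intros [w [Hw [Hl Ew]]]. exists (inv_word w). repeat split.
  - now apply word_over_inv.
  - unfold inv_word. now rewrite length_rev, length_map.
  - now rewrite eval_inv_word, Ew, ginv_mul, ginv_involutive.
Qed.

Lemma dist_le_mono X r r' g h : r <= r' -> dist_le X r g h -> dist_le X r' g h.
Proof. intros Hr [w [Hw [Hl Ew]]]. exists w. repeat split; auto. lia. Qed.

Lemma dist_le_translate X r g x y : dist_le X r x y -> dist_le X r (gmul g x) (gmul g y).
Proof. intros [w [Hw [Hl Ew]]]. exists w. repeat split; auto. now rewrite ginv_mul_translate. Qed.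

Lemma generates_dist_le X g h : generates X -> exists r, dist_le X r g h.
Proof. intros HX. destruct (HX (gmul (ginv g) h)) as [w [Hw Ew]]. now exists (length w), w. Qed.

Definition joined X (r : nat) P (p q : G) : Prop :=
  exists (n : nat) (s : nat -> G),
    s 0 = p /\ s n = q /\
    (forall i, i <= n -> P (s i)) /\
    (forall i, i < n -> dist_le X r (s i) (s (S i))).

Lemma joined_step X r P p q : P p -> P q -> dist_le X r p q -> joined X r P p q.
Proof.
  intros Pp Pq Hd. exists 1, (fun i => match i with 0 => p | _ => q end).
  repeat split; auto.
  - intros [|i] _; auto.
  - intros i Hi. replace i with 0 by lia. exact Hd.
Qed.

Lemma joined_trans X r P p q y : joined X r P p y -> joined X r P y q -> joined X r P p q.
Proof.
  intros [n [s [s0 [sn [sP sd]]]]] [m [t [t0 [tm [tP td]]]]].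
  exists (n + m), (fun i => if le_lt_dec i n then s i else t (i - n)).
  repeat split.
  - destruct (le_lt_dec 0 n); [exact s0 | lia].
  - destruct (le_lt_dec (n + m) n).
    + replace m with 0 in * by lia. rewrite Nat.add_0_r, sn, <- t0. exact tm.
    + now replace (n + m - n) with m by lia.
  - intros i Hi. destruct (le_lt_dec i n); [apply sP | apply tP]; lia.
  - intros i Hi. destruct (le_lt_dec i n), (le_lt_dec (S i) n); try lia.
    + apply sd; lia.
    + replace i with n by lia. replace (S n - n) with 1 by lia. rewrite sn, <- t0. apply td. lia.
    + replace (S i - n) with (S (i - n)) by lia. apply td. lia.
Qed.

Lemma joined_sym X r P p q : joined X r P p q -> joined X r P q p.
Proof.
  intros [n [s [s0 [sn [sP sd]]]]].
  exists n, (fun i => s (n - i)). repeat split.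
  - now rewrite Nat.sub_0_r.
  - now rewrite Nat.sub_diag.
  - intros i Hi. apply sP. lia.
  - intros i Hi. apply dist_le_sym. replace (n - i) with (S (n - S i)) by lia. apply sd. lia.
Qed.

Lemma joined_mono X r r' P p q : r <= r' -> joined X r P p q -> joined X r' P p q.
Proof.
  intros Hr [n [s [s0 [sn [sP sd]]]]]. exists n, s. repeat split; auto.
  intros i Hi. apply dist_le_mono with r; auto.
Qed.

Lemma positive_cone_absorb P a c : positive_cone P -> P c -> exists x, P x /\ P (gmul a x).
Proof.
  intros [Pmul [Ptri _]] Pc. destruct (Ptri a) as [Pa|[Pa| ->]].
  - exists c. auto.
  - exists (gmul (ginv a) c). split; [auto|]. now rewrite gmulA, gmulV, g1mul.
  - exists c. now rewrite g1mul.
Qed.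

Lemma positive_cone_empty P : positive_cone P -> (forall g, ~ P g) -> forall g, g = gone.
Proof.
  intros [_ [Ptri _]] P0 g.
  destruct (Ptri g) as [Pg|[Pg|Hg]]; [destruct (P0 _ Pg)..|exact Hg].
Qed.

End GroupLaws.

Lemma joined_map (G G' : group) (X : list G) (X' : list G') r r'
  (P : G -> Prop) (P' : G' -> Prop) (f : G -> G') p q :
  (forall z, P z -> P' (f z)) ->
  (forall z w, dist_le X r z w -> dist_le X' r' (f z) (f w)) ->
  joined X r P p q -> joined X' r' P' (f p) (f q).
Proof.
  intros HP Hd [n [s [s0 [sn [sP sd]]]]].
  exists n, (fun i => f (s i)). repeat split.
  - now rewrite s0.
  - now rewrite sn.
  - intros i Hi. apply HP, sP, Hi.
  - intros i Hi. apply Hd, sd, Hi.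
Qed.

Definition is_hom {H G : group} (f : H -> G) : Prop :=
  forall x y, f (gmul x y) = gmul (f x) (f y).

Section Homomorphisms.
Variables (H G : group) (XH : list H) (X : list G) (f : H -> G).
Hypotheses (f_hom : is_hom f) (f_gens : forall h, In h XH -> In (f h) X).

Lemma hom_one : f gone = gone.
Proof. apply (gmul_cancel_l (f gone)). now rewrite <- f_hom, !gmul1. Qed.

Lemma hom_inv x : f (ginv x) = ginv (f x).
Proof. apply ginv_unique. now rewrite <- f_hom, gmulV, hom_one. Qed.

Definition map_word (w : list (H * bool)) : list (G * bool) :=
  map (fun l => (f (fst l), snd l)) w.

Lemma eval_map_word w : eval_word (map_word w) = f (eval_word w).
Proof.
  induction w as [|[x b] w IH].
  - symmetry; apply hom_one.
  - change (gmul (if b then ginv (f x) else f x) (eval_word (map_word w))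
            = f (gmul (if b then ginv x else x) (eval_word w))).
    rewrite IH, f_hom. destruct b; now rewrite ?hom_inv.
Qed.

Lemma word_over_map w : word_over XH w -> word_over X (map_word w).
Proof.
  intros Hw l Hl. apply in_map_iff in Hl as [l0 [<- Hl0]].
  exact (f_gens _ (Hw _ Hl0)).
Qed.

Lemma dist_le_hom r x y : dist_le XH r x y -> dist_le X r (f x) (f y).
Proof.
  intros [w [Hw [Hl Ew]]]. exists (map_word w). repeat split.
  - now apply word_over_map.
  - unfold map_word. now rewrite length_map.
  - now rewrite eval_map_word, Ew, f_hom, hom_inv.
Qed.

Lemma positive_cone_preimage (P : G -> Prop) :
  (forall x y, f x = f y -> x = y) -> positive_cone P -> positive_cone (fun x => P (f x)).
Proof.
  intros f_inj [Pmul [Ptri [Pasym [Pne1 PneV]]]]. repeat split.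
  - intros x y Px Py. rewrite f_hom. auto.
  - intros g. rewrite hom_inv. destruct (Ptri (f g)) as [Hg|[Hg|Hg]]; auto.
    right; right. apply f_inj. now rewrite hom_one.
  - intros g Pg. rewrite hom_inv. exact (Pasym _ Pg).
  - intros g Pg ->. rewrite hom_one in Pg. exact (Pne1 _ Pg eq_refl).
  - intros g Pg ->. rewrite hom_inv, hom_one in Pg. exact (PneV _ Pg eq_refl).
Qed.

Lemma coarsely_connected_image (P : G -> Prop) :
  (forall p, P p -> exists h, p = f h) ->
  coarsely_connected XH (fun h => P (f h)) -> coarsely_connected X P.
Proof.
  intros Pf [r [r1 conn]]. exists r. split; [exact r1|].
  intros p q Pp Pq. destruct (Pf p Pp) as [x ->], (Pf q Pq) as [y ->].
  apply joined_map with (X := XH) (r := r) (P := fun h => P (f h)).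
  - now intros.
  - apply dist_le_hom.
  - exact (conn x y Pp Pq).
Qed.

Section TranslatedImage.
Variable P : G -> Prop.
Hypothesis P_mul : forall x y, P x -> P y -> P (gmul x y).
Variables (rH j R : nat) (c : H).
Hypotheses
  (connH : forall z z', P (f z) -> P (f z') -> joined XH rH (fun h => P (f h)) z z')
  (Pc : P (f c)) (jump : dist_le XH j gone c) (rH_R : rH <= R) (j_R : j <= R).

Lemma joined_translate g z : P g -> P (f z) -> joined X R P g (gmul g (f z)).
Proof.
  intros Pg Pz. apply joined_trans with (gmul g (f c)).
  - apply joined_step; auto.
    assert (Hd : dist_le X j (gmul g (f gone)) (gmul g (f c)))
      by now apply dist_le_translate, dist_le_hom.
    rewrite hom_one, gmul1 in Hd. now apply dist_le_mono with j.
  - apply joined_map with (X := XH) (r := rH) (P := fun h => P (f h))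
      (f := fun h => gmul g (f h)).
    + intros h Ph. now apply P_mul.
    + intros x y Hd. apply dist_le_mono with rH; auto.
      now apply dist_le_translate, dist_le_hom.
    + now apply connH.
Qed.

End TranslatedImage.
End Homomorphisms.

Arguments map_word {H G}.

Section Product.
Variables A B : group.

Lemma prod_mul (a x : A) (b y : B) :
  @gmul (prod_group A B) (a, b) (x, y) = (gmul a x, gmul b y).
Proof. reflexivity. Qed.

Definition prod_inl (a : A) : prod_group A B := (a, gone).
Definition prod_inr (b : B) : prod_group A B := (gone, b).

Lemma prod_inl_hom : is_hom prod_inl.
Proof. intros x y. unfold prod_inl. now rewrite prod_mul, gmul1. Qed.

Lemma prod_inr_hom : is_hom prod_inr.
Proof. intros x y. unfold prod_inr. now rewrite prod_mul, gmul1. Qed.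

Lemma prod_inl_inj x y : prod_inl x = prod_inl y -> x = y.
Proof. now injection 1. Qed.

Lemma prod_inr_inj x y : prod_inr x = prod_inr y -> x = y.
Proof. now injection 1. Qed.

Lemma prod_inl_inr (a : A) (b : B) : gmul (prod_inl a) (prod_inr b) = (a, b).
Proof. unfold prod_inl, prod_inr. now rewrite prod_mul, gmul1, g1mul. Qed.

Lemma prod_inr_inl (a : A) (b : B) : gmul (prod_inr b) (prod_inl a) = (a, b).
Proof. unfold prod_inl, prod_inr. now rewrite prod_mul, gmul1, g1mul. Qed.

Lemma prod_mul_inl (a x : A) (b : B) :
  gmul ((a, b) : prod_group A B) (prod_inl x) = (gmul a x, b).
Proof. unfold prod_inl. now rewrite prod_mul, gmul1. Qed.

Lemma prod_mul_inr (a : A) (b y : B) :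
  gmul ((a, b) : prod_group A B) (prod_inr y) = (a, gmul b y).
Proof. unfold prod_inr. now rewrite prod_mul, gmul1. Qed.

Definition prod_gens (XA : list A) (XB : list B) : list (prod_group A B) :=
  map prod_inl XA ++ map prod_inr XB.

Lemma prod_gens_inl XA XB x : In x XA -> In (prod_inl x) (prod_gens XA XB).
Proof. intros Hx. apply in_or_app. left. now apply in_map. Qed.

Lemma prod_gens_inr XA XB y : In y XB -> In (prod_inr y) (prod_gens XA XB).
Proof. intros Hy. apply in_or_app. right. now apply in_map. Qed.

Lemma generates_prod XA XB : generates XA -> generates XB -> generates (prod_gens XA XB).
Proof.
  intros genA genB [a b].
  destruct (genA a) as [wa [Wa Ea]], (genB b) as [wb [Wb Eb]].
  exists (map_word prod_inl wa ++ map_word prod_inr wb). split.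
  - apply word_over_app; eapply word_over_map; eauto using prod_gens_inl, prod_gens_inr.
  - rewrite eval_word_app, !eval_map_word, Ea, Eb by (apply prod_inl_hom || apply prod_inr_hom).
    apply prod_inl_inr.
Qed.

Lemma left_orderable_prod :
  left_orderable A -> left_orderable B -> left_orderable (prod_group A B).
Proof.
  intros [ltA [irrA [transA [totA invA]]]] [ltB [irrB [transB [totB invB]]]].
  exists (fun p q : prod_group A B =>
            ltA (fst p) (fst q) \/ (fst p = fst q /\ ltB (snd p) (snd q))).
  repeat split.
  - intros [a b] [H|[_ H]]; [exact (irrA _ H) | exact (irrB _ H)].
  - intros [a b] [a' b'] [a'' b'']; simpl.
    intros [H1|[-> H1]] [H2|[-> H2]]; eauto.
  - intros [a b] [a' b']; simpl.
    destruct (totA a a') as [H|[<-|H]]; auto.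
    destruct (totB b b') as [H|[<-|H]]; auto.
  - intros [g h] [a b] [a' b']; simpl. intros [H|[-> H]]; auto.
Qed.

Section ProductCone.
Variables (XA : list A) (XB : list B) (P : prod_group A B -> Prop).
Hypothesis P_cone : positive_cone P.

Lemma positive_cone_inl : positive_cone (fun a => P (prod_inl a)).
Proof. exact (positive_cone_preimage prod_inl_hom prod_inl_inj P_cone). Qed.

Lemma positive_cone_inr : positive_cone (fun b => P (prod_inr b)).
Proof. exact (positive_cone_preimage prod_inr_hom prod_inr_inj P_cone). Qed.

Lemma prod_cone_mul x y : P x -> P y -> P (gmul x y).
Proof. exact (proj1 P_cone x y). Qed.

Lemma prod_cone_in_inl :
  (forall b, ~ P (prod_inr b)) -> forall p, P p -> exists a, p = prod_inl a.
Proof.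
  intros P0 [a b] _. exists a. unfold prod_inl. f_equal.
  exact (positive_cone_empty positive_cone_inr P0 b).
Qed.

Lemma prod_cone_in_inr :
  (forall a, ~ P (prod_inl a)) -> forall p, P p -> exists b, p = prod_inr b.
Proof.
  intros P0 [a b] _. exists b. unfold prod_inr. f_equal.
  exact (positive_cone_empty positive_cone_inl P0 a).
Qed.

Section NontrivialFactors.
Variables (rA rB jA jB : nat) (a0 : A) (b0 : B).
Hypotheses
  (rA_pos : 1 <= rA)
  (connA : forall x y, P (prod_inl x) -> P (prod_inl y) ->
             joined XA rA (fun a => P (prod_inl a)) x y)
  (connB : forall x y, P (prod_inr x) -> P (prod_inr y) ->
             joined XB rB (fun b => P (prod_inr b)) x y)
  (Pa0 : P (prod_inl a0)) (Pb0 : P (prod_inr b0))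
  (jumpA : dist_le XA jA gone a0) (jumpB : dist_le XB jB gone b0).

Definition prod_radius : nat := rA + rB + jA + jB.

Lemma joined_translate_inl g x :
  P g -> P (prod_inl x) -> joined (prod_gens XA XB) prod_radius P g (gmul g (prod_inl x)).
Proof.
  apply (joined_translate _ prod_inl_hom (prod_gens_inl XA XB) _ prod_cone_mul connA Pa0 jumpA);
    unfold prod_radius; lia.
Qed.

Lemma joined_translate_inr g y :
  P g -> P (prod_inr y) -> joined (prod_gens XA XB) prod_radius P g (gmul g (prod_inr y)).
Proof.
  apply (joined_translate _ prod_inr_hom (prod_gens_inr XA XB) _ prod_cone_mul connB Pb0 jumpB);
    unfold prod_radius; lia.
Qed.

Lemma joined_to_inr p :
  P p -> exists b, P (prod_inr b) /\ joined (prod_gens XA XB) prod_radius P p (prod_inr b).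
Proof.
  destruct p as [a b]. intros Pab.
  destruct (positive_cone_absorb a a0 positive_cone_inl Pa0) as [x [Px Pax]].
  destruct (positive_cone_absorb b b0 positive_cone_inr Pb0) as [y [Py Pby]].
  assert (Pa'b : P (gmul a x, b)) by (rewrite <- prod_mul_inl; auto using prod_cone_mul).
  exists (gmul b y). split; [exact Pby|].
  apply joined_trans with (gmul a x, b).
  { rewrite <- prod_mul_inl. now apply joined_translate_inl. }
  apply joined_trans with (gmul a x, gmul b y).
  { rewrite <- prod_mul_inr. now apply joined_translate_inr. }
  rewrite <- prod_inr_inl. now apply joined_sym, joined_translate_inl.
Qed.

Lemma coarsely_connected_nontrivial : coarsely_connected (prod_gens XA XB) P.
Proof.
  exists prod_radius. split; [unfold prod_radius; lia|].
  intros p q Pp Pq.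
  destruct (joined_to_inr Pp) as [b1 [Pb1 J1]], (joined_to_inr Pq) as [b2 [Pb2 J2]].
  apply joined_trans with (prod_inr b1); [exact J1|].
  apply joined_trans with (prod_inr b2); [|now apply joined_sym].
  apply joined_mono with rB; [unfold prod_radius; lia|].
  apply joined_map with (X := XB) (r := rB) (P := fun b => P (prod_inr b)); auto.
  apply (dist_le_hom _ prod_inr_hom (prod_gens_inr XA XB)).
Qed.

End NontrivialFactors.

Lemma coarsely_connected_prod_cone :
  generates XA -> generates XB ->
  coarsely_connected XA (fun a => P (prod_inl a)) ->
  coarsely_connected XB (fun b => P (prod_inr b)) ->
  coarsely_connected (prod_gens XA XB) P.
Proof.
  intros genA genB connA connB.
  destruct (classic (exists b, P (prod_inr b))) as [[b0 Pb0]|noB].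
  2: { apply (coarsely_connected_image _ prod_inl_hom (prod_gens_inl XA XB)); [|exact connA].
       apply prod_cone_in_inl. intros b Pb. eauto. }
  destruct (classic (exists a, P (prod_inl a))) as [[a0 Pa0]|noA].
  2: { apply (coarsely_connected_image _ prod_inr_hom (prod_gens_inr XA XB)); [|exact connB].
       apply prod_cone_in_inr. intros a Pa. eauto. }
  destruct connA as [rA [rA_pos connA]], connB as [rB [_ connB]].
  destruct (generates_dist_le gone a0 genA) as [jA jumpA].
  destruct (generates_dist_le gone b0 genB) as [jB jumpB].
  exact (coarsely_connected_nontrivial rA_pos connA connB Pa0 Pb0 jumpA jumpB).
Qed.

End ProductCone.
End Product.

Arguments prod_gens {A B}.

Theorem proposition4p17 (A B : group) :
  finitely_generated A -> left_orderable A ->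
  finitely_generated B -> left_orderable B ->
  prieto A -> prieto B -> prieto (prod_group A B).
Proof.
  intros _ loA _ loB [_ [_ [XA [genA connA]]]] [_ [_ [XB [genB connB]]]].
  assert (genAB : generates (prod_gens XA XB)) by now apply generates_prod.
  split; [now exists (prod_gens XA XB)|].
  split; [now apply left_orderable_prod|].
  exists (prod_gens XA XB). split; [exact genAB|].
  intros P P_cone. apply coarsely_connected_prod_cone; auto.
  - apply connA, positive_cone_inl, P_cone.
  - apply connB, positive_cone_inr, P_cone.
Qed.
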